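(* Let $(h_n)_{n\ge 0}$ be a sequence of positive real numbers (not depending on $a$) and, for $a>0$, let \[ h(a,x)=\sum_{n=0}^{\infty}\frac{h_n}{(a)_n}x^n \] (a formal power series in $x$). Let $b>a>0$ and $\delta>0$, and write \[ \lambda_{a,b,\delta}(x)=h(a+\delta,x)h(b,x)-h(b+\delta,x)h(a,x)=\sum_{m=0}^{\infty}\lambda_m x^m . \] Then $\lambda_0=0$ and $\lambda_m<0$ for all $m\ge 1$, so that $a\mapsto h(a,x)$ is strictly log-convex for $x>0$.
   Context: $(a)_n=a(a+1)\cdots(a+n-1)$ is the Pochhammer symbol, $(a)_0=1$. Power series are understood formally; the log-convexity statement refers to values $x>0$ at which the series converge. *)

From Stdlib Require Import Reals.
From Coquelicot Require Import Coquelicot.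
Open Scope R_scope.

Fixpoint poch (a : R) (n : nat) : R :=
  match n with
  | O => 1
  | S k => poch a k * (a + INR k)
  end.

Definition hcoef (hs : nat -> R) (a : R) (n : nat) : R := hs n / poch a n.

(* value of the series h(a,x) (meaningful where it converges) *)
Definition hval (hs : nat -> R) (a x : R) : R :=
  Series (fun n => hcoef hs a n * x ^ n).

(* m-th coefficient of the formal power series
   h(a+d,x) h(b,x) - h(b+d,x) h(a,x)  (Cauchy products). *)
Definition lambda_coef (hs : nat -> R) (a b d : R) (m : nat) : R :=
  sum_f_R0 (fun k => hcoef hs (a + d) k * hcoef hs b (m - k)
                     - hcoef hs (b + d) k * hcoef hs a (m - k)) m.

From Stdlib Require Import Reals Lra Lia Psatz.
From Coquelicot Require Import Coquelicot.
Open Scope R_scope.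

(* In lambda_m pair the products with indices (k, m-k) and (m-k, k).
   Writing (c)_{k+l} = (c)_k (c+k)_l, each pair is negative by two instances
   of the cross inequality (a)_n (b+d)_n <= (a+d)_n (b)_n (strict for n >= 1),
   once for the heads (c)_k and once for the tails (c+k)_l; it holds factor
   by factor because (a+i)(b+d+i) < (a+d+i)(b+i) for a < b.
   Log-convexity: c |-> ln (c)_n is concave, so every term of h(c,x) is
   log-convex in c, and a sum of log-convex terms is log-convex by the
   weighted AM-GM inequality applied to the normalised terms. *)

Lemma poch_pos c n : 0 < c -> 0 < poch c n.
Proof.
  intros Hc; induction n as [|n IH]; simpl; [lra|].
  pose proof (pos_INR n); apply Rmult_lt_0_compat; lra.
Qed.

Lemma poch_add c k l : poch c (k + l) = poch c k * poch (c + INR k) l.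
Proof.
  induction l as [|l IH]; simpl.
  - rewrite Nat.add_0_r; ring.
  - rewrite Nat.add_succ_r; simpl; rewrite IH, plus_INR; ring.
Qed.

Lemma poch_le c c' n : 0 < c -> c <= c' -> poch c n <= poch c' n.
Proof.
  intros Hc Hcc'; induction n as [|n IH]; simpl; [lra|].
  pose proof (pos_INR n); pose proof (poch_pos c n Hc).
  apply Rmult_le_compat; lra.
Qed.

Lemma add_le_add_of_mul_le x y p q : 0 < p -> 0 < q -> p <= x -> q <= x ->
  p * q <= x * y -> p + q <= x + y.
Proof. intros; assert ((x - p) * (x - q) >= 0) by nra; nra. Qed.

Lemma add_lt_add_of_mul_lt x y p q : 0 < p -> 0 < q -> p <= x -> q <= x ->
  p * q < x * y -> p + q < x + y.
Proof. intros; assert ((x - p) * (x - q) >= 0) by nra; nra. Qed.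

Section PochCross.

Variables a b d : R.
Hypotheses (ha : 0 < a) (hab : a < b) (hd : 0 < d).

Lemma poch_cross_le n : poch a n * poch (b + d) n <= poch (a + d) n * poch b n.
Proof.
  induction n as [|n IH]; simpl; [lra|].
  pose proof (pos_INR n).
  pose proof (poch_pos a n ha); pose proof (poch_pos (b + d) n ltac:(lra)).
  assert (Hstep : (a + INR n) * (b + d + INR n) <= (a + d + INR n) * (b + INR n)) by nra.
  replace (poch a n * (a + INR n) * (poch (b + d) n * (b + d + INR n)))
    with (poch a n * poch (b + d) n * ((a + INR n) * (b + d + INR n))) by ring.
  replace (poch (a + d) n * (a + d + INR n) * (poch b n * (b + INR n)))
    with (poch (a + d) n * poch b n * ((a + d + INR n) * (b + INR n))) by ring.
  apply Rmult_le_compat; nra.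
Qed.

Lemma poch_cross_lt n : (1 <= n)%nat ->
  poch a n * poch (b + d) n < poch (a + d) n * poch b n.
Proof.
  intros Hn; destruct n as [|n]; [lia|]; simpl.
  pose proof (pos_INR n); pose proof (poch_cross_le n).
  pose proof (poch_pos a n ha); pose proof (poch_pos (b + d) n ltac:(lra)).
  assert (Hstep : (a + INR n) * (b + d + INR n) < (a + d + INR n) * (b + INR n)) by nra.
  replace (poch a n * (a + INR n) * (poch (b + d) n * (b + d + INR n)))
    with (poch a n * poch (b + d) n * ((a + INR n) * (b + d + INR n))) by ring.
  replace (poch (a + d) n * (a + d + INR n) * (poch b n * (b + INR n)))
    with (poch (a + d) n * poch b n * ((a + d + INR n) * (b + INR n))) by ring.
  assert (0 < poch a n * poch (b + d) n) by nra.
  assert (0 < (a + d + INR n) * (b + INR n)) by nra.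
  nra.
Qed.

Lemma poch_inv_sum_le n :
  / poch (a + d) n + / poch b n <= / poch a n + / poch (b + d) n.
Proof.
  apply add_le_add_of_mul_le; try (apply Rinv_0_lt_compat, poch_pos; lra);
    try (apply Rinv_le_contravar; [apply poch_pos | apply poch_le]; lra).
  rewrite <- !Rinv_mult; apply Rinv_le_contravar;
    [apply Rmult_lt_0_compat; apply poch_pos; lra|].
  apply poch_cross_le.
Qed.

Lemma poch_inv_sum_lt n : (1 <= n)%nat ->
  / poch (a + d) n + / poch b n < / poch a n + / poch (b + d) n.
Proof.
  intros Hn.
  apply add_lt_add_of_mul_lt; try (apply Rinv_0_lt_compat, poch_pos; lra);
    try (apply Rinv_le_contravar; [apply poch_pos | apply poch_le]; lra).
  rewrite <- !Rinv_mult; apply Rinv_lt_contravar;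
    [apply Rmult_lt_0_compat; apply Rmult_lt_0_compat; apply poch_pos; lra|].
  apply poch_cross_lt, Hn.
Qed.

End PochCross.

Lemma sum_f_R0_lt0 (f : nat -> R) n : (forall k, (k <= n)%nat -> f k < 0) ->
  sum_f_R0 f n < 0.
Proof.
  induction n as [|n IH]; intros Hf; simpl; [apply Hf; lia|].
  assert (sum_f_R0 f n < 0) by (apply IH; intros; apply Hf; lia).
  assert (f (S n) < 0) by (apply Hf; lia); lra.
Qed.

Section LambdaCoef.

Variable hs : nat -> R.
Hypothesis hpos : forall n, 0 < hs n.
Variables a b d : R.
Hypotheses (ha : 0 < a) (hab : a < b) (hd : 0 < d).

Definition lambda_term k j :=
  hcoef hs (a + d) k * hcoef hs b j - hcoef hs (b + d) k * hcoef hs a j.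

Lemma lambda_coef_0 : lambda_coef hs a b d 0 = 0.
Proof. unfold lambda_coef, hcoef; simpl; field. Qed.

Lemma lambda_term_pair_lt0 k j : (k <= j)%nat -> (1 <= j)%nat ->
  lambda_term k j + lambda_term j k < 0.
Proof.
  intros Hkj Hj; destruct (Nat.le_exists_sub k j Hkj) as [l [-> _]].
  rewrite (Nat.add_comm l k) in Hj |- *; unfold lambda_term, hcoef; rewrite !poch_add.
  pose proof (pos_INR k).
  assert (Hpoch_neq0 : forall c n, 0 < c -> poch c n <> 0)
    by (intros; apply Rgt_not_eq, poch_pos; assumption).
  set (al := / (poch a k * poch (b + d) k)); set (be := / (poch (a + d) k * poch b k)).
  set (Sp := / poch (a + d + INR k) l + / poch (b + INR k) l).
  set (Sx := / poch (a + INR k) l + / poch (b + d + INR k) l).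
  assert (Hfactor :
    hs (k + l)%nat / (poch (a + d) k * poch (a + d + INR k) l) * (hs k / poch b k)
    - hs (k + l)%nat / (poch (b + d) k * poch (b + d + INR k) l) * (hs k / poch a k)
    + (hs k / poch (a + d) k * (hs (k + l)%nat / (poch b k * poch (b + INR k) l))
       - hs k / poch (b + d) k * (hs (k + l)%nat / (poch a k * poch (a + INR k) l)))
    = hs k * hs (k + l)%nat * (be * Sp - al * Sx)).
  { unfold al, be, Sp, Sx; field; repeat split; apply Hpoch_neq0; lra. }
  rewrite Rplus_comm, Hfactor.
  assert (Hshift : forall c, c + INR k + d = c + d + INR k) by (intros; ring).
  assert (Hhead : be <= al).
  { apply Rinv_le_contravar; [apply Rmult_lt_0_compat; apply poch_pos; lra|].
    apply poch_cross_le; lra. }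
  assert (Htail : Sp <= Sx).
  { unfold Sp, Sx; rewrite <- !Hshift; apply poch_inv_sum_le; lra. }
  assert (Hstrict : be < al \/ Sp < Sx).
  { destruct k as [|k'].
    - right; unfold Sp, Sx; rewrite <- !Hshift.
      apply poch_inv_sum_lt; simpl in Hj; lra || lia.
    - left; apply Rinv_lt_contravar;
        [apply Rmult_lt_0_compat; apply Rmult_lt_0_compat; apply poch_pos; lra|].
      apply poch_cross_lt; lra || lia. }
  assert (0 < be) by (apply Rinv_0_lt_compat, Rmult_lt_0_compat; apply poch_pos; lra).
  assert (0 < Sp) by (apply Rplus_lt_0_compat; apply Rinv_0_lt_compat, poch_pos; lra).
  assert (Hbracket : be * Sp - al * Sx < 0) by (destruct Hstrict; nra).
  pose proof (hpos k); pose proof (hpos (k + l)%nat).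
  assert (0 < hs k * hs (k + l)%nat) by nra; nra.
Qed.

Lemma lambda_coef_lt0 m : (1 <= m)%nat -> lambda_coef hs a b d m < 0.
Proof.
  intros Hm.
  assert (Hdef : lambda_coef hs a b d m = sum_f_R0 (fun k => lambda_term k (m - k)) m)
    by reflexivity.
  assert (Hrev : sum_f_R0 (fun k => lambda_term (m - k) k) m = lambda_coef hs a b d m).
  { rewrite Hdef, <- (sum_f_R0_skip (fun k => lambda_term k (m - k))).
    apply sum_eq; intros k Hk; f_equal; lia. }
  assert (Hpairs : sum_f_R0 (fun k => lambda_term k (m - k) + lambda_term (m - k) k) m < 0).
  { apply sum_f_R0_lt0; intros k Hk.
    destruct (Nat.le_gt_cases k (m - k)) as [Hle | Hgt].
    - apply lambda_term_pair_lt0; lia.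
    - rewrite Rplus_comm; apply lambda_term_pair_lt0; lia. }
  rewrite plus_sum, Hrev, <- Hdef in Hpairs; lra.
Qed.

End LambdaCoef.

(* Both brackets are nonnegative since exp u >= 1 + u: convexity via the tangent at M. *)
Lemma exp_convex_gap t X Y : let M := t * X + (1 - t) * Y in
  t * exp X + (1 - t) * exp Y - exp M
  = exp M * (t * (exp (X - M) - (1 + (X - M))) + (1 - t) * (exp (Y - M) - (1 + (Y - M)))).
Proof.
  intros M.
  replace (exp X) with (exp M * exp (X - M)) by (rewrite <- exp_plus; f_equal; ring).
  replace (exp Y) with (exp M * exp (Y - M)) by (rewrite <- exp_plus; f_equal; ring).
  unfold M; ring.
Qed.

Lemma exp_convex_le t X Y : 0 < t < 1 ->
  exp (t * X + (1 - t) * Y) <= t * exp X + (1 - t) * exp Y.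
Proof.
  intros Ht; pose proof (exp_convex_gap t X Y) as Hgap; simpl in Hgap.
  set (M := t * X + (1 - t) * Y) in Hgap |- *.
  pose proof (exp_pos M); pose proof (exp_ineq1_le (X - M)); pose proof (exp_ineq1_le (Y - M)).
  assert (0 <= exp M * (t * (exp (X - M) - (1 + (X - M))) + (1 - t) * (exp (Y - M) - (1 + (Y - M)))))
    by (apply Rmult_le_pos; nra).
  lra.
Qed.

Lemma exp_convex_lt t X Y : 0 < t < 1 -> X <> Y ->
  exp (t * X + (1 - t) * Y) < t * exp X + (1 - t) * exp Y.
Proof.
  intros Ht HXY; pose proof (exp_convex_gap t X Y) as Hgap; simpl in Hgap.
  set (M := t * X + (1 - t) * Y) in Hgap |- *.
  assert (HXM : X - M <> 0) by (unfold M; intro; apply HXY; nra).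
  pose proof (exp_pos M); pose proof (exp_ineq1 (X - M) HXM); pose proof (exp_ineq1_le (Y - M)).
  assert (0 < exp M * (t * (exp (X - M) - (1 + (X - M))) + (1 - t) * (exp (Y - M) - (1 + (Y - M)))))
    by (apply Rmult_lt_0_compat; nra).
  lra.
Qed.

Lemma ln_concave_le t p q : 0 < t < 1 -> 0 < p -> 0 < q ->
  t * ln p + (1 - t) * ln q <= ln (t * p + (1 - t) * q).
Proof.
  intros Ht Hp Hq; rewrite <- (ln_exp (t * ln p + (1 - t) * ln q)).
  apply ln_le; [apply exp_pos|].
  rewrite <- (exp_ln p Hp) at 2; rewrite <- (exp_ln q Hq) at 2.
  apply exp_convex_le; exact Ht.
Qed.

Lemma ln_concave_lt t p q : 0 < t < 1 -> 0 < p -> 0 < q -> p <> q ->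
  t * ln p + (1 - t) * ln q < ln (t * p + (1 - t) * q).
Proof.
  intros Ht Hp Hq Hpq; rewrite <- (ln_exp (t * ln p + (1 - t) * ln q)).
  apply ln_increasing; [apply exp_pos|].
  rewrite <- (exp_ln p Hp) at 2; rewrite <- (exp_ln q Hq) at 2.
  apply exp_convex_lt; [exact Ht|].
  intros Heq; apply Hpq, ln_inv; assumption.
Qed.

Lemma ln_poch_concave t c1 c2 n : 0 < t < 1 -> 0 < c1 -> 0 < c2 ->
  t * ln (poch c1 n) + (1 - t) * ln (poch c2 n) <= ln (poch (t * c1 + (1 - t) * c2) n).
Proof.
  intros Ht Hc1 Hc2; induction n as [|n IH]; simpl; [rewrite ln_1; lra|].
  pose proof (pos_INR n).
  assert (0 < t * c1 + (1 - t) * c2) by nra.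
  rewrite !ln_mult by (apply poch_pos || idtac; lra).
  replace (t * c1 + (1 - t) * c2 + INR n)
    with (t * (c1 + INR n) + (1 - t) * (c2 + INR n)) by ring.
  pose proof (ln_concave_le t (c1 + INR n) (c2 + INR n) Ht ltac:(lra) ltac:(lra)); lra.
Qed.

Lemma ln_hcoef_term hs c x n : (forall n, 0 < hs n) -> 0 < c -> 0 < x ->
  ln (hcoef hs c n * x ^ n) = ln (hs n * x ^ n) - ln (poch c n).
Proof.
  intros hpos Hc Hx; unfold hcoef.
  pose proof (hpos n); pose proof (poch_pos c n Hc); pose proof (pow_lt x n Hx).
  rewrite <- ln_div by (try apply Rmult_lt_0_compat; assumption).
  f_equal; field; lra.
Qed.

Lemma hcoef_term_pos hs c x n : (forall n, 0 < hs n) -> 0 < c -> 0 < x ->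
  0 < hcoef hs c n * x ^ n.
Proof.
  intros hpos Hc Hx; unfold hcoef.
  pose proof (hpos n); pose proof (poch_pos c n Hc); pose proof (pow_lt x n Hx).
  apply Rmult_lt_0_compat; [apply Rdiv_lt_0_compat|]; assumption.
Qed.

Lemma Series_nonneg (w : nat -> R) : ex_series w -> (forall n, 0 <= w n) -> 0 <= Series w.
Proof.
  intros Hw Hnn; rewrite <- (Rmult_0_l (Series w)), <- Series_scal_l.
  apply Series_le; [|exact Hw]; intros n; rewrite Rmult_0_l; split; [lra | apply Hnn].
Qed.

Lemma Series_pos (w : nat -> R) n0 : ex_series w -> (forall n, 0 <= w n) -> 0 < w n0 ->
  0 < Series w.
Proof.
  intros Hw Hnn Hn0; rewrite (Series_incr_n w (S n0)) by (lia || exact Hw); simpl pred.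
  assert (Htail : 0 <= Series (fun k => w (S n0 + k)%nat)).
  { apply Series_nonneg; [|intros; apply Hnn].
    apply (ex_series_incr_n w (S n0)), Hw. }
  assert (Hhead : w n0 <= sum_f_R0 w n0).
  { destruct n0 as [|n0]; simpl; [lra|].
    pose proof (cond_pos_sum w n0 Hnn); lra. }
  lra.
Qed.

Lemma Series_lt (u v : nat -> R) n0 : ex_series u -> ex_series v ->
  (forall n, u n <= v n) -> u n0 < v n0 -> Series u < Series v.
Proof.
  intros Hu Hv Hle Hlt.
  assert (Hdiff : 0 < Series (fun n => v n - u n)).
  { apply (Series_pos _ n0); [|intros n; specialize (Hle n); lra | lra].
    apply (ex_series_minus v u); assumption. }
  rewrite Series_minus in Hdiff by assumption; lra.
Qed.

Lemma exp_mean_le_scaled t P Q A B : 0 < t < 1 -> 0 < P -> 0 < Q -> 0 < A -> 0 < B ->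
  exp (t * ln P + (1 - t) * ln Q)
  <= exp (t * ln A + (1 - t) * ln B) * (t * (P / A) + (1 - t) * (Q / B)).
Proof.
  intros Ht HP HQ HA HB.
  replace (t * ln P + (1 - t) * ln Q)
    with (t * ln A + (1 - t) * ln B + (t * ln (P / A) + (1 - t) * ln (Q / B)))
    by (rewrite !ln_div by assumption; ring).
  rewrite exp_plus; apply Rmult_le_compat_l; [left; apply exp_pos|].
  rewrite <- (exp_ln (P / A)) at 2 by (apply Rdiv_lt_0_compat; assumption).
  rewrite <- (exp_ln (Q / B)) at 2 by (apply Rdiv_lt_0_compat; assumption).
  apply exp_convex_le; exact Ht.
Qed.

Lemma Series_ln_convex (u v w : nat -> R) t n0 : 0 < t < 1 ->
  (forall n, 0 < u n) -> (forall n, 0 < v n) -> (forall n, 0 < w n) ->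
  ex_series u -> ex_series v -> ex_series w ->
  (forall n, ln (w n) <= t * ln (u n) + (1 - t) * ln (v n)) ->
  ln (w n0) < t * ln (u n0) + (1 - t) * ln (v n0) ->
  ln (Series w) < t * ln (Series u) + (1 - t) * ln (Series v).
Proof.
  intros Ht Hu Hv Hw Eu Ev Ew Hle Hlt.
  set (A := Series u); set (B := Series v).
  assert (HA : 0 < A) by (apply (Series_pos _ 0); [|intros; left|]; auto).
  assert (HB : 0 < B) by (apply (Series_pos _ 0); [|intros; left|]; auto).
  set (G := exp (t * ln A + (1 - t) * ln B)).
  set (V := fun n => G * t / A * u n + G * (1 - t) / B * v n).
  assert (HV : forall n, V n = G * (t * (u n / A) + (1 - t) * (v n / B)))
    by (intros n; unfold V; field; lra).
  assert (Hbound : forall n, exp (t * ln (u n) + (1 - t) * ln (v n)) <= V n).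
  { intros n; rewrite HV; apply exp_mean_le_scaled; auto. }
  assert (HwV : forall n, w n <= V n).
  { intros n; rewrite <- (exp_ln (w n) (Hw n)); eapply Rle_trans; [|apply Hbound].
    destruct (Hle n) as [Hl | ->]; [left; apply exp_increasing, Hl | lra]. }
  assert (HwV0 : w n0 < V n0).
  { rewrite <- (exp_ln (w n0) (Hw n0)); eapply Rlt_le_trans; [|apply Hbound].
    apply exp_increasing, Hlt. }
  assert (EV : ex_series V).
  { apply (ex_series_plus (fun n => G * t / A * u n) (fun n => G * (1 - t) / B * v n));
      [apply (ex_series_scal_l _ u) | apply (ex_series_scal_l _ v)]; assumption. }
  assert (SV : Series V = G).
  { unfold V; rewrite Series_plus, !Series_scal_l;
      [fold A B; field; lra | apply (ex_series_scal_l _ u) | apply (ex_series_scal_l _ v)];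
      assumption. }
  assert (Hsum : Series w < G) by (rewrite <- SV; apply (Series_lt _ _ n0); assumption).
  rewrite <- (ln_exp (t * ln A + (1 - t) * ln B)); fold G.
  apply ln_increasing; [apply (Series_pos _ 0); [|intros; left|]; auto | exact Hsum].
Qed.

Section HTermLogConvex.

Variable hs : nat -> R.
Hypothesis hpos : forall n, 0 < hs n.
Variables c1 c2 t x : R.
Hypotheses (Hc1 : 0 < c1) (Hc2 : 0 < c2) (Ht : 0 < t < 1) (Hx : 0 < x).

Lemma hcoef_term_ln_convex n :
  ln (hcoef hs (t * c1 + (1 - t) * c2) n * x ^ n)
  <= t * ln (hcoef hs c1 n * x ^ n) + (1 - t) * ln (hcoef hs c2 n * x ^ n).
Proof.
  assert (0 < t * c1 + (1 - t) * c2) by nra.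
  rewrite !ln_hcoef_term by assumption.
  pose proof (ln_poch_concave t c1 c2 n Ht Hc1 Hc2); lra.
Qed.

Lemma hcoef_term1_ln_convex_strict : c1 <> c2 ->
  ln (hcoef hs (t * c1 + (1 - t) * c2) 1 * x ^ 1)
  < t * ln (hcoef hs c1 1 * x ^ 1) + (1 - t) * ln (hcoef hs c2 1 * x ^ 1).
Proof.
  intros Hc12; assert (0 < t * c1 + (1 - t) * c2) by nra.
  rewrite !ln_hcoef_term by assumption; simpl poch; rewrite !Rmult_1_l, !Rplus_0_r.
  pose proof (ln_concave_lt t c1 c2 Ht Hc1 Hc2 Hc12); lra.
Qed.

End HTermLogConvex.

Theorem theorem3 (hs : nat -> R) (hpos : forall n, 0 < hs n)
  (a b d : R) (ha : 0 < a) (hab : a < b) (hd : 0 < d) :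
  lambda_coef hs a b d 0 = 0 /\
  (forall m : nat, (1 <= m)%nat -> lambda_coef hs a b d m < 0) /\
  (forall x : R, 0 < x ->
     (forall c : R, 0 < c -> ex_series (fun n => hcoef hs c n * x ^ n)) ->
     forall (c1 c2 t : R), 0 < c1 -> c1 < c2 -> 0 < t < 1 ->
       ln (hval hs (t * c1 + (1 - t) * c2) x)
         < t * ln (hval hs c1 x) + (1 - t) * ln (hval hs c2 x)).
Proof.
  split; [|split].
  - apply lambda_coef_0.
  - intros m Hm; apply lambda_coef_lt0; assumption.
  - intros x Hx Hex c1 c2 t Hc1 Hc12 Ht.
    assert (Hc : 0 < t * c1 + (1 - t) * c2) by nra.
    apply (Series_ln_convex _ _ _ t 1);
      try (intros n; apply hcoef_term_pos; assumption || lra); try (apply Hex; lra).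
    + exact Ht.
    + intros n; apply hcoef_term_ln_convex; assumption || lra.
    + apply hcoef_term1_ln_convex_strict; assumption || lra.
Qed.
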